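(* Let H be the Hilbert calculus LFI3 extended with the axiom schema (cc) $\circ\circ\alpha$. Then for every set of formulas $\Gamma$ and formula $\alpha$, $\Gamma\vdash_{H}\alpha$ if and only if $\Gamma\vDash_{LFI1}\alpha$; i.e. LFI1 = LFI3 + (cc).
   Context: Formulas are built from a countable set of propositional variables using unary $\neg,\circ$ and binary $\land,\lor,\to$; $\alpha\leftrightarrow\beta:=(\alpha\to\beta)\land(\beta\to\alpha)$, $\sim\alpha:=\neg\alpha\land\circ\alpha$. mbC is the Hilbert calculus with the axiom schemas of a standard axiomatization of positive classical propositional logic in $\land,\lor,\to$, plus $\alpha\lor\neg\alpha$ and $\circ\alpha\to(\alpha\to(\neg\alpha\to\beta))$, with modus ponens as only rule. The Hilbert calculus LFI3 is mbC plus the schemas $\circ\alpha\lor(\alpha\land\neg\alpha)$, $\circ\circ\circ\alpha$, $\neg\neg\alpha\to\alpha$, $\alpha\to\neg\neg\alpha$, $\neg\circ\neg\alpha\leftrightarrow\neg\circ\alpha$, and: A1 $\neg(\alpha\land\beta)\leftrightarrow(\neg\alpha\lor\neg\beta)$; A2 $\neg(\alpha\lor\beta)\leftrightarrow(\neg\alpha\land\neg\beta)$; A3 $\neg(\alpha\to\beta)\leftrightarrow(\neg\beta\land(\sim\neg\alpha\lor\neg\circ\alpha))$; A4 $\neg\circ(\alpha\land\beta)\leftrightarrow(((\sim\neg\alpha\land\neg\circ\beta)\lor(\neg\circ\alpha\land\sim\neg\beta))\lor(\neg\circ\alpha\land\neg\circ\beta))$; A5 $\neg\circ(\alpha\lor\beta)\leftrightarrow(((\sim\alpha\land\neg\circ\beta)\lor(\neg\circ\alpha\land\sim\beta))\lor(\neg\circ\alpha\land\neg\circ\beta))$;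 A6 $\neg\circ(\alpha\to\beta)\leftrightarrow((\sim\neg\alpha\land\neg\circ\beta)\lor(\sim\neg\alpha\land\neg\circ\alpha\land\sim\beta)\lor(\neg\circ\alpha\land\neg\circ\beta)\lor(\sim\alpha\land\neg\circ\alpha\land\sim\beta))$. LFI1 is the three-valued matrix logic on $\{1,\frac12,0\}$ with designated set $\{1,\frac12\}$, $\land=\min$, $\lor=\max$ (order $0<\frac12<1$), $a\to c=1$ if $a=0$ and $a\to c=c$ otherwise, $\neg1=0$, $\neg\frac12=\frac12$, $\neg0=1$, $\circ1=\circ0=1$, $\circ\frac12=0$; $\Gamma\vDash_{LFI1}\alpha$ iff every homomorphic valuation designating all of $\Gamma$ designates $\alpha$. *)

Inductive formula : Type :=
| Var  : nat -> formula
| Neg  : formula -> formula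
| Circ : formula -> formula
| And  : formula -> formula -> formula
| Or   : formula -> formula -> formula
| Imp  : formula -> formula -> formula.

Definition Iff (a b : formula) : formula := And (Imp a b) (Imp b a).
Definition Sim (a : formula) : formula := And (Neg a) (Circ a).

(** Axiom schemas of mbC: the standard positive classical axioms
    (Carnielli–Coniglio–Marcos Ax1–Ax9), plus α∨¬α and (bc1). *)
Inductive mbC_axiom : formula -> Prop :=
| Ax1 a b : mbC_axiom (Imp a (Imp b a))
| Ax2 a b c : mbC_axiom (Imp (Imp a b) (Imp (Imp a (Imp b c)) (Imp a c)))
| Ax3 a b : mbC_axiom (Imp a (Imp b (And a b)))
| Ax4 a b : mbC_axiom (Imp (And a b) a)
| Ax5 a b : mbC_axiom (Imp (And a b) b)
| Ax6 a b : mbC_axiom (Imp a (Or a b))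
| Ax7 a b : mbC_axiom (Imp b (Or a b))
| Ax8 a b c : mbC_axiom (Imp (Imp a c) (Imp (Imp b c) (Imp (Or a b) c)))
| Ax9 a b : mbC_axiom (Or a (Imp a b))
| Ax10 a : mbC_axiom (Or a (Neg a))
| bc1 a b : mbC_axiom (Imp (Circ a) (Imp a (Imp (Neg a) b))).

(** Additional axiom schemas of LFI3. Iterated ∧/∨ are associated to the left. *)
Inductive LFI3_extra_axiom : formula -> Prop :=
| ci_or a : LFI3_extra_axiom (Or (Circ a) (And a (Neg a)))
| ccc a : LFI3_extra_axiom (Circ (Circ (Circ a)))
| cf a : LFI3_extra_axiom (Imp (Neg (Neg a)) a)
| ce a : LFI3_extra_axiom (Imp a (Neg (Neg a)))
| negcircneg a : LFI3_extra_axiom (Iff (Neg (Circ (Neg a))) (Neg (Circ a)))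
| A1 a b : LFI3_extra_axiom (Iff (Neg (And a b)) (Or (Neg a) (Neg b)))
| A2 a b : LFI3_extra_axiom (Iff (Neg (Or a b)) (And (Neg a) (Neg b)))
| A3 a b : LFI3_extra_axiom
    (Iff (Neg (Imp a b)) (And (Neg b) (Or (Sim (Neg a)) (Neg (Circ a)))))
| A4 a b : LFI3_extra_axiom
    (Iff (Neg (Circ (And a b)))
         (Or (Or (And (Sim (Neg a)) (Neg (Circ b)))
                 (And (Neg (Circ a)) (Sim (Neg b))))
             (And (Neg (Circ a)) (Neg (Circ b)))))
| A5 a b : LFI3_extra_axiom
    (Iff (Neg (Circ (Or a b)))
         (Or (Or (And (Sim a) (Neg (Circ b)))
                 (And (Neg (Circ a)) (Sim b)))
             (And (Neg (Circ a)) (Neg (Circ b)))))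
| A6 a b : LFI3_extra_axiom
    (Iff (Neg (Circ (Imp a b)))
         (Or (Or (Or (And (Sim (Neg a)) (Neg (Circ b)))
                     (And (And (Sim (Neg a)) (Neg (Circ a))) (Sim b)))
                 (And (Neg (Circ a)) (Neg (Circ b))))
             (And (And (Sim a) (Neg (Circ a))) (Sim b)))).

Inductive cc_axiom : formula -> Prop :=
| cc a : cc_axiom (Circ (Circ a)).

Definition H_axiom (f : formula) : Prop :=
  mbC_axiom f \/ LFI3_extra_axiom f \/ cc_axiom f.

Inductive H_derivable (Gamma : formula -> Prop) : formula -> Prop :=
| d_prem f : Gamma f -> H_derivable Gamma f
| d_ax f : H_axiom f -> H_derivable Gamma f
| d_mp a b : H_derivable Gamma a -> H_derivable Gamma (Imp a b) ->
             H_derivable Gamma b.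

Inductive V3 : Type := V1 | Vhalf | V0.

Definition rank (x : V3) : nat := match x with V0 => 0 | Vhalf => 1 | V1 => 2 end.

Definition and3 (x y : V3) : V3 := if Nat.leb (rank x) (rank y) then x else y.
Definition or3 (x y : V3) : V3 := if Nat.leb (rank x) (rank y) then y else x.
Definition imp3 (x y : V3) : V3 := match x with V0 => V1 | _ => y end.
Definition neg3 (x : V3) : V3 := match x with V1 => V0 | Vhalf => Vhalf | V0 => V1 end.
Definition circ3 (x : V3) : V3 := match x with Vhalf => V0 | _ => V1 end.

Definition designated (x : V3) : Prop := x = V1 \/ x = Vhalf.

Fixpoint eval (v : nat -> V3) (f : formula) : V3 :=
  match f with
  | Var n => v n
  | Neg a => neg3 (eval v a)
  | Circ a => circ3 (eval v a)
  | And a b => and3 (eval v a) (eval v b)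
  | Or a b => or3 (eval v a) (eval v b)
  | Imp a b => imp3 (eval v a) (eval v b)
  end.

Definition LFI1_consequence (Gamma : formula -> Prop) (a : formula) : Prop :=
  forall v : nat -> V3,
    (forall g, Gamma g -> designated (eval v g)) -> designated (eval v a).

(* Soundness: every axiom of H takes a designated value under every LFI1
   valuation, and modus ponens preserves designation.

   Completeness: if Γ ⊬ α, extend Γ (Lindenbaum) to a theory Δ that is
   maximal among the sets not deriving α.  Such a Δ is closed under
   derivation, prime, contains β or ¬β for every β, and contains ∘β iff it
   does not contain both β and ¬β.  Reading a value off the pair (β ∈ Δ,
   ¬β ∈ Δ) as 1 for (yes, no), 1/2 for (yes, yes) and 0 for (no, _), one
   checks connective by connective that this is an LFI1 valuation; the
   case of ∘ needs (cc), which makes ¬∘β ∈ Δ equivalent to ∘β ∉ Δ.  The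
   valuation designates exactly Δ, so it designates Γ but not α. *)

From Stdlib Require Import Classical ClassicalEpsilon Lia Cantor.

Ltac eval_cases v :=
  repeat match goal with |- context [eval v ?x] => destruct (eval v x) end;
  simpl; unfold designated; first [left; reflexivity | right; reflexivity].

Lemma H_axiom_designated (v : nat -> V3) (f : formula) :
  H_axiom f -> designated (eval v f).
Proof.
  intros [Hf | [Hf | Hf]]; destruct Hf; unfold Iff, Sim; simpl; eval_cases v.
Qed.

Lemma H_sound (Gamma : formula -> Prop) (f : formula) :
  H_derivable Gamma f -> LFI1_consequence Gamma f.
Proof.
  intros Hf v Hv; induction Hf as [f Hf | f Hf | b c _ IHb _ IHbc].
  - exact (Hv f Hf).
  - exact (H_axiom_designated v f Hf).
  - simpl in IHbc; destruct (eval v b); auto.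
    destruct IHb as [E | E]; discriminate.
Qed.

Definition add_premise (Gamma : formula -> Prop) (b : formula) : formula -> Prop :=
  fun g => Gamma g \/ g = b.

Lemma H_derivable_mono (Gamma Gamma' : formula -> Prop) (f : formula) :
  (forall g, Gamma g -> Gamma' g) -> H_derivable Gamma f -> H_derivable Gamma' f.
Proof.
  intros Hsub Hf; induction Hf as [g Hg | g Hg | b c _ IHb _ IHbc].
  - exact (d_prem _ g (Hsub g Hg)).
  - exact (d_ax _ g Hg).
  - exact (d_mp _ b c IHb IHbc).
Qed.

Lemma H_derivable_mbC (Gamma : formula -> Prop) (f : formula) :
  mbC_axiom f -> H_derivable Gamma f.
Proof. intro Hf; apply d_ax; left; exact Hf. Qed.

Lemma d_mp2 (Gamma : formula -> Prop) (b c d : formula) :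
  H_derivable Gamma b -> H_derivable Gamma c ->
  H_derivable Gamma (Imp b (Imp c d)) -> H_derivable Gamma d.
Proof. intros Hb Hc Hbcd; exact (d_mp _ c d Hc (d_mp _ b _ Hb Hbcd)). Qed.

Lemma H_derivable_refl (Gamma : formula -> Prop) (b : formula) :
  H_derivable Gamma (Imp b b).
Proof.
  apply (d_mp2 _ (Imp b (Imp b b)) (Imp b (Imp (Imp b b) b)));
    apply H_derivable_mbC; constructor.
Qed.

Lemma H_deduction (Gamma : formula -> Prop) (b c : formula) :
  H_derivable (add_premise Gamma b) c -> H_derivable Gamma (Imp b c).
Proof.
  intro Hc; induction Hc as [g [Hg | ->] | g Hg | d e _ IHd _ IHde].
  - apply (d_mp _ g); [exact (d_prem _ g Hg) | apply H_derivable_mbC, Ax1].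
  - apply H_derivable_refl.
  - apply (d_mp _ g); [exact (d_ax _ g Hg) | apply H_derivable_mbC, Ax1].
  - exact (d_mp2 _ _ _ _ IHd IHde (H_derivable_mbC _ _ (Ax2 b d e))).
Qed.

Lemma H_derivable_chain (S : nat -> formula -> Prop) (f : formula) :
  (forall n m g, n <= m -> S n g -> S m g) ->
  H_derivable (fun g => exists n, S n g) f -> exists n, H_derivable (S n) f.
Proof.
  intros Hchain Hf; induction Hf as [g [n Hg] | g Hg | b c _ [n Hb] _ [m Hbc]].
  - exists n; exact (d_prem _ g Hg).
  - exists 0; exact (d_ax _ g Hg).
  - exists (max n m); apply (d_mp _ b c).
    + apply (H_derivable_mono (S n)); [|exact Hb].
      intros g; apply Hchain; lia.
    + apply (H_derivable_mono (S m)); [|exact Hbc].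
      intros g; apply Hchain; lia.
Qed.

Fixpoint code (f : formula) : nat :=
  match f with
  | Var n => to_nat (0, n)
  | Neg b => to_nat (1, code b)
  | Circ b => to_nat (2, code b)
  | And b c => to_nat (3, to_nat (code b, code c))
  | Or b c => to_nat (4, to_nat (code b, code c))
  | Imp b c => to_nat (5, to_nat (code b, code c))
  end.

Lemma to_nat_inj (x y x' y' : nat) :
  to_nat (x, y) = to_nat (x', y') -> x = x' /\ y = y'.
Proof.
  intro E; apply (f_equal of_nat) in E; rewrite !cancel_of_to in E.
  injection E; auto.
Qed.

Lemma code_inj (f g : formula) : code f = code g -> f = g.
Proof.
  revert g; induction f; destruct g; cbn [code]; intro E;
    apply to_nat_inj in E; destruct E as [E1 E2]; try discriminate;
    try (apply to_nat_inj in E2; destruct E2 as [E2 E3]); f_equal; auto.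
Qed.

Record relmax (X : formula -> Prop) (a : formula) : Prop := {
  relmax_underivable : ~ H_derivable X a;
  relmax_maximal : forall f, ~ X f -> H_derivable (add_premise X f) a
}.

Section Lindenbaum.

Variables (Gamma : formula -> Prop) (a : formula).

Fixpoint lindenbaum_stage (n : nat) : formula -> Prop :=
  match n with
  | 0 => Gamma
  | S n => fun f => lindenbaum_stage n f \/
      (code f = n /\ ~ H_derivable (add_premise (lindenbaum_stage n) f) a)
  end.

Definition lindenbaum (f : formula) : Prop := exists n, lindenbaum_stage n f.

Lemma lindenbaum_stage_mono (n m : nat) (f : formula) :
  n <= m -> lindenbaum_stage n f -> lindenbaum_stage m f.
Proof. induction 1; simpl; auto. Qed.

Hypothesis Gamma_underivable : ~ H_derivable Gamma a.

Lemma lindenbaum_stage_underivable (n : nat) :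
  ~ H_derivable (lindenbaum_stage n) a.
Proof.
  induction n as [|n IHn]; simpl; [exact Gamma_underivable|]; intro Ha.
  destruct (classic (exists g, code g = n /\
      ~ H_derivable (add_premise (lindenbaum_stage n) g) a)) as [[g [Hg Hga]] | Hnone].
  - apply Hga; refine (H_derivable_mono _ _ a _ Ha).
    intros h [Hh | [Hh _]]; [left; exact Hh | right; apply code_inj; congruence].
  - apply IHn; refine (H_derivable_mono _ _ a _ Ha).
    intros h [Hh | Hh]; [exact Hh | exfalso; apply Hnone; exists h; exact Hh].
Qed.

Lemma lindenbaum_relmax : relmax lindenbaum a.
Proof.
  split.
  - intro Ha; destruct (H_derivable_chain _ a lindenbaum_stage_mono Ha) as [n Hn].
    exact (lindenbaum_stage_underivable n Hn).
  - intros f Hf.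
    destruct (classic (H_derivable (add_premise (lindenbaum_stage (code f)) f) a))
      as [Ha | Ha].
    + refine (H_derivable_mono _ _ a _ Ha).
      intros g [Hg | Hg]; [left; exists (code f); exact Hg | right; exact Hg].
    + exfalso; apply Hf; exists (S (code f)); right; auto.
Qed.

End Lindenbaum.

Section RelativelyMaximal.

Variables (X : formula -> Prop) (a : formula).
Hypothesis X_relmax : relmax X a.

Lemma relmax_closed (f : formula) : H_derivable X f -> X f.
Proof.
  intro Hf; apply NNPP; intro Hnf.
  apply (relmax_underivable _ _ X_relmax).
  exact (d_mp _ f a Hf (H_deduction _ _ _ (relmax_maximal _ _ X_relmax f Hnf))).
Qed.

Lemma relmax_axiom (f : formula) : H_axiom f -> X f.
Proof. intro Hf; apply relmax_closed, d_ax, Hf. Qed.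

Lemma relmax_mp (b c : formula) : X b -> X (Imp b c) -> X c.
Proof. intros Hb Hbc; apply relmax_closed; apply (d_mp _ b); apply d_prem; auto. Qed.

Lemma relmax_and (b c : formula) : X (And b c) <-> X b /\ X c.
Proof.
  split.
  - intro Hbc; split; apply (relmax_mp _ _ Hbc), relmax_axiom; left; constructor.
  - intros [Hb Hc]; apply (relmax_mp c _ Hc), (relmax_mp b _ Hb).
    apply relmax_axiom; left; constructor.
Qed.

Lemma relmax_or (b c : formula) : X (Or b c) <-> X b \/ X c.
Proof.
  split.
  - intro Hbc; apply NNPP; intro Hnbc.
    apply (relmax_underivable _ _ X_relmax).
    apply (d_mp _ (Or b c)); [exact (d_prem _ _ Hbc)|].
    apply (d_mp2 _ (Imp b a) (Imp c a)); [| | apply H_derivable_mbC, Ax8];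
      apply H_deduction, (relmax_maximal _ _ X_relmax); tauto.
  - intros [Hb | Hc]; [apply (relmax_mp b) | apply (relmax_mp c)]; auto;
      apply relmax_axiom; left; constructor.
Qed.

Lemma relmax_imp (b c : formula) : X (Imp b c) <-> ~ X b \/ X c.
Proof.
  split.
  - intro Hbc; destruct (classic (X b)) as [Hb | Hb];
      [right; exact (relmax_mp _ _ Hb Hbc) | left; exact Hb].
  - intros [Hb | Hc].
    + assert (Hax : X (Or b (Imp b c))) by (apply relmax_axiom; left; constructor).
      apply relmax_or in Hax; tauto.
    + apply (relmax_mp c _ Hc), relmax_axiom; left; constructor.
Qed.

Lemma relmax_iff (b c : formula) : X (Iff b c) -> (X b <-> X c).
Proof.
  unfold Iff; rewrite relmax_and; intros [Hbc Hcb].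
  split; intro; eapply relmax_mp; eauto.
Qed.

Lemma relmax_excluded_middle (b : formula) : X b \/ X (Neg b).
Proof. apply relmax_or, relmax_axiom; left; constructor. Qed.

Lemma relmax_consistent (b : formula) : X (Circ b) -> X b -> X (Neg b) -> False.
Proof.
  intros Hcb Hb Hnb; apply (relmax_underivable _ _ X_relmax).
  apply (d_mp _ (Neg b)); [exact (d_prem _ _ Hnb)|].
  apply (d_mp _ b); [exact (d_prem _ _ Hb)|].
  apply (d_mp _ (Circ b)); [exact (d_prem _ _ Hcb)|].
  apply H_derivable_mbC, bc1.
Qed.

Lemma relmax_circ (b : formula) : X (Circ b) <-> ~ (X b /\ X (Neg b)).
Proof.
  split.
  - intros Hcb [Hb Hnb]; exact (relmax_consistent b Hcb Hb Hnb).
  - intro Hb.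
    assert (Hax : X (Or (Circ b) (And b (Neg b)))).
    { apply relmax_axiom; right; left; constructor. }
    rewrite relmax_or, relmax_and in Hax; tauto.
Qed.

(* This is where (cc) is used. *)
Lemma relmax_neg_circ (b : formula) : X (Neg (Circ b)) <-> ~ X (Circ b).
Proof.
  split.
  - intros Hncb Hcb; apply (relmax_consistent (Circ b)); auto.
    apply relmax_axiom; right; right; constructor.
  - pose proof (relmax_excluded_middle (Circ b)); tauto.
Qed.

Lemma relmax_neg_neg (b : formula) : X (Neg (Neg b)) <-> X b.
Proof.
  split; intro; eapply relmax_mp; eauto; apply relmax_axiom; right; left; constructor.
Qed.

Definition agrees (f : formula) (x : V3) : Prop :=
  match x with
  | V1 => X f /\ ~ X (Neg f)
  | Vhalf => X f /\ X (Neg f)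
  | V0 => ~ X f
  end.

Lemma agrees_designated (f : formula) (x : V3) :
  agrees f x -> (X f <-> designated x).
Proof. unfold designated; destruct x; simpl; intuition discriminate. Qed.

Lemma agrees_neg (b : formula) (x : V3) : agrees b x -> agrees (Neg b) (neg3 x).
Proof.
  pose proof (relmax_neg_neg b); pose proof (relmax_excluded_middle b).
  destruct x; simpl; tauto.
Qed.

Lemma agrees_circ (b : formula) (x : V3) : agrees b x -> agrees (Circ b) (circ3 x).
Proof.
  pose proof (relmax_circ b); pose proof (relmax_neg_circ b).
  pose proof (relmax_excluded_middle b).
  destruct x; simpl; tauto.
Qed.

Lemma agrees_and (b c : formula) (x y : V3) :
  agrees b x -> agrees c y -> agrees (And b c) (and3 x y).
Proof.
  pose proof (relmax_and b c); pose proof (relmax_and (Neg b) (Neg c)).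
  pose proof (relmax_iff _ _ (relmax_axiom _ (or_intror (or_introl (A1 b c))))).
  pose proof (relmax_or (Neg b) (Neg c)).
  pose proof (relmax_excluded_middle b); pose proof (relmax_excluded_middle c).
  destruct x, y; simpl; tauto.
Qed.

Lemma agrees_or (b c : formula) (x y : V3) :
  agrees b x -> agrees c y -> agrees (Or b c) (or3 x y).
Proof.
  pose proof (relmax_or b c).
  pose proof (relmax_iff _ _ (relmax_axiom _ (or_intror (or_introl (A2 b c))))).
  pose proof (relmax_and (Neg b) (Neg c)).
  pose proof (relmax_excluded_middle b); pose proof (relmax_excluded_middle c).
  destruct x, y; simpl; tauto.
Qed.

Lemma agrees_imp (b c : formula) (x y : V3) :
  agrees b x -> agrees c y -> agrees (Imp b c) (imp3 x y).
Proof.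
  pose proof (relmax_imp b c).
  pose proof (relmax_iff _ _ (relmax_axiom _ (or_intror (or_introl (A3 b c))))).
  unfold Sim in *.
  pose proof (relmax_and (Neg c) (Or (And (Neg (Neg b)) (Circ (Neg b))) (Neg (Circ b)))).
  pose proof (relmax_or (And (Neg (Neg b)) (Circ (Neg b))) (Neg (Circ b))).
  pose proof (relmax_and (Neg (Neg b)) (Circ (Neg b))).
  pose proof (relmax_neg_neg b); pose proof (relmax_circ b).
  pose proof (relmax_neg_circ b); pose proof (relmax_circ (Neg b)).
  pose proof (relmax_excluded_middle b); pose proof (relmax_excluded_middle c).
  destruct x, y; simpl; tauto.
Qed.

Definition canonical_valuation (n : nat) : V3 :=
  if excluded_middle_informative (X (Var n)) then
    if excluded_middle_informative (X (Neg (Var n))) then Vhalf else V1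
  else V0.

Lemma canonical_valuation_agrees (f : formula) :
  agrees f (eval canonical_valuation f).
Proof.
  induction f; simpl.
  - unfold canonical_valuation.
    destruct (excluded_middle_informative (X (Var n)));
      [destruct (excluded_middle_informative (X (Neg (Var n))))|]; simpl; auto.
  - apply agrees_neg; assumption.
  - apply agrees_circ; assumption.
  - apply agrees_and; assumption.
  - apply agrees_or; assumption.
  - apply agrees_imp; assumption.
Qed.

Lemma canonical_valuation_designated (f : formula) :
  X f <-> designated (eval canonical_valuation f).
Proof. apply agrees_designated, canonical_valuation_agrees. Qed.

End RelativelyMaximal.

Lemma H_complete (Gamma : formula -> Prop) (a : formula) :
  LFI1_consequence Gamma a -> H_derivable Gamma a.
Proof.
  intro Hcons; apply NNPP; intro Ha.
  pose proof (lindenbaum_relmax Gamma a Ha) as R.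
  apply (relmax_underivable _ _ R), d_prem.
  apply (canonical_valuation_designated _ _ R), Hcons.
  intros g Hg; apply (canonical_valuation_designated _ _ R).
  exists 0; exact Hg.
Qed.

Theorem corollary1 (Gamma : formula -> Prop) (a : formula) :
  H_derivable Gamma a <-> LFI1_consequence Gamma a.
Proof.
  split; [apply H_sound | apply H_complete].
Qed.
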